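(* For $P,Q\in\mathcal E_n$ homogeneous of the same degree, the scalars $\Delta_P(Q)$, $\Delta_Q(P)$, $(P)\nabla_Q$ and $(Q)\nabla_P$ (elements of $\mathcal E_n^0=\mathbb Q$) are all equal. Consequently, setting $\langle P,Q\rangle$ equal to this common value for $P,Q$ homogeneous of equal degree and $\langle P,Q\rangle=0$ for homogeneous $P,Q$ of different degrees defines a symmetric bilinear form on $\mathcal E_n$, and for all $P_1,P_2,Q$: $\langle P_1P_2,Q\rangle=\langle P_1,\Delta_{P_2}(Q)\rangle=\langle P_2,(Q)\nabla_{P_1}\rangle$ (i.e. $\Delta_{P}$ is adjoint to right multiplication by $P$ and $\nabla_P$ to left multiplication by $P$).
   Context: Let $n\ge 1$. The Fomin–Kirillov algebra $\mathcal E_n$ is the associative $\mathbb Q$-algebra with generators $x_{ij}$ for ordered pairs of distinct $i,j\in[n]$, subject to $x_{ij}=-x_{ji}$, $x_{ij}^2=0$, $x_{ij}x_{kl}=x_{kl}x_{ij}$ for distinct $i,j,k,l$, and $x_{ij}x_{jk}+x_{jk}x_{ki}+x_{ki}x_{ij}=0$ for distinct $i,j,k$. It is graded by degree; $\mathcal E_n^d$ is the degree-$d$ part. $\mathcal E_n$ is also graded by $S_n$: the $S_n$-degree of $x_{ij}$ is the transposition $\sigma_{ij}=(i\,j)$, extended multiplicatively; $\sigma_Q$ is the $S_n$-degree of an $S_n$-homogeneous $Q$; $S_n$ acts by automorphisms via $\sigma(x_{ij})=x_{\sigma(i)\sigma(j)}$. For distinct $a,b$, $\Delta_{ab}:\mathcal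 E_n\to\mathcal E_n$ is the unique linear map with $\Delta_{ab}(x_{ij})=1$ if $(i,j)=(a,b)$, $-1$ if $(i,j)=(b,a)$, $0$ otherwise, and $\Delta_{ab}(PQ)=\Delta_{ab}(P)Q+\sigma_{ab}(P)\Delta_{ab}(Q)$; and $\nabla_{ab}$ (written on the right) is the unique linear map with $(x_{ij})\nabla_{ab}=\Delta_{ab}(x_{ij})$ and $(PQ)\nabla_{ab}=P\cdot(Q)\nabla_{ab}+(P)\nabla_{\sigma_Q(a)\sigma_Q(b)}\cdot Q$ for $S_n$-homogeneous $Q$. These operators satisfy the defining relations of $\mathcal E_n$ (with $x_{ab}\mapsto\Delta_{ab}$, resp. $\nabla_{ab}$), so for $P=x_{i_1j_1}\cdots x_{i_kj_k}$ one defines $\Delta_P=\Delta_{i_1j_1}\circ\cdots\circ\Delta_{i_kj_k}$ and $(Q)\nabla_P=(\cdots((Q)\nabla_{i_1j_1})\cdots)\nabla_{i_kj_k}$, extended linearly to all $P\in\mathcal E_n$. *)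

(* Fomin-Kirillov algebra E_n, presented as the free
   associative Q-algebra on letters x_ij (encoded as pairs (i,j)), modulo the
   two-sided ideal generated by the defining relations.  Elements of the free
   algebra are represented by formal finite sums: lists of (coefficient, word). *)
From HB Require Import structures.
From mathcomp Require Import all_boot all_order all_algebra all_fingroup.
Set Implicit Arguments. Unset Strict Implicit. Unset Printing Implicit Defensive.
Import Order.TTheory GRing.Theory Num.Theory.
Local Open Scope ring_scope.

Section FK.
Variable n : nat.

(* the letter (i,j) stands for the generator x_ij *)
Definition letter := ('I_n * 'I_n)%type.
Definition word := seq letter.
Definition fa := seq (rat * word).

Definition coef (P : fa) (w : word) : rat := \sum_(x <- P | x.2 == w) x.1.
Definition fadd (P Q : fa) : fa := P ++ Q.
Definition fscale (c : rat) (P : fa) : fa := [seq (c * x.1, x.2) | x <- P].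
Definition fmul (P Q : fa) : fa := [seq (x.1 * y.1, x.2 ++ y.2) | x <- P, y <- Q].
Definition fword (w : word) : fa := [:: (1, w)].
Definition x_ (i j : 'I_n) : fa := fword [:: (i, j)].

(* Defining relations of E_n (the letters (i,i) are killed, so that the free
   algebra on all pairs modulo them is the free algebra on the x_ij, i != j). *)
Inductive fk_rel : fa -> Prop :=
| rel_diag i : fk_rel (x_ i i)
| rel_anti i j : i != j -> fk_rel (fadd (x_ i j) (x_ j i))
| rel_sq i j : i != j -> fk_rel (fmul (x_ i j) (x_ i j))
| rel_comm i j k l : uniq [:: i; j; k; l] ->
    fk_rel (fadd (fmul (x_ i j) (x_ k l)) (fscale (-1) (fmul (x_ k l) (x_ i j))))
| rel_three i j k : uniq [:: i; j; k] ->
    fk_rel (fadd (fmul (x_ i j) (x_ j k))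
             (fadd (fmul (x_ j k) (x_ k i)) (fmul (x_ k i) (x_ i j)))).

Inductive fk_ideal : fa -> Prop :=
| ideal_nil : fk_ideal [::]
| ideal_cons (P r : fa) (c : rat) (u v : word) :
    fk_ideal P -> fk_rel r ->
    fk_ideal (fadd P (fscale c (fmul (fword u) (fmul r (fword v))))).

Definition fk_eq (P Q : fa) : Prop :=
  exists R, fk_ideal R /\ forall w, coef P w - coef Q w = coef R w.

Definition homogeneous (d : nat) (P : fa) : Prop :=
  forall w, size w != d -> coef P w = 0.

Definition hpart (d : nat) (P : fa) : fa := [seq x <- P | size x.2 == d].

(* degree 0 component, identified with a rational number: E_n^0 = Q *)
Definition scal (P : fa) : rat := coef P [::].

(* Delta_ab on generators; Delta_aa is taken to be 0 *)
Definition ev (a b : 'I_n) (l : letter) : rat :=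
  if a == b then 0 else if l == (a, b) then 1 else if l == (b, a) then -1 else 0.

Definition sig (a b : 'I_n) (l : letter) : letter :=
  (tperm a b l.1, tperm a b l.2).

(* Delta_ab(l w) = Delta_ab(l) w + sigma_ab(l) Delta_ab(w) *)
Fixpoint dlt_word (a b : 'I_n) (w : word) : fa :=
  match w with
  | [::] => [::]
  | l :: w' => (ev a b l, w') :: [seq (x.1, sig a b l :: x.2) | x <- dlt_word a b w']
  end.

(* (w l) nabla_ab = w (l)nabla_ab + (w) nabla_{s(a) s(b)} l,  s = sigma_l,
   computed on the reversed word *)
Fixpoint nab_rword (a b : 'I_n) (rw : word) : fa :=
  match rw with
  | [::] => [::]
  | l :: rw' => (ev a b l, rev rw') ::
      [seq (x.1, rcons x.2 l) | x <- nab_rword (tperm l.1 l.2 a) (tperm l.1 l.2 b) rw']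
  end.

Definition flin (f : word -> fa) (P : fa) : fa :=
  flatten [seq fscale x.1 (f x.2) | x <- P].

Definition Delta_ab (a b : 'I_n) (Q : fa) : fa := flin (dlt_word a b) Q.
Definition Nabla_ab (a b : 'I_n) (Q : fa) : fa := flin (fun w => nab_rword a b (rev w)) Q.

Definition DeltaW (w : word) (Q : fa) : fa := foldr (fun l X => Delta_ab l.1 l.2 X) Q w.
Definition NablaW (w : word) (Q : fa) : fa := foldl (fun X l => Nabla_ab l.1 l.2 X) Q w.

Definition Delta (P Q : fa) : fa := flatten [seq fscale x.1 (DeltaW x.2 Q) | x <- P].
Definition Nabla (Q P : fa) : fa := flatten [seq fscale x.1 (NablaW x.2 Q) | x <- P].

(* <P,Q> : for homogeneous P, Q of equal degree the scalar Delta_P(Q);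
   0 for different degrees; extended bilinearly *)
Definition fk_form (P Q : fa) : rat :=
  \sum_(x <- P) x.1 * scal (DeltaW x.2 (hpart (size x.2) Q)).

End FK.

From HB Require Import structures.
From mathcomp Require Import all_boot all_order all_algebra all_fingroup.
From mathcomp Require Import ring lra.
Set Implicit Arguments. Unset Strict Implicit. Unset Printing Implicit Defensive.
Import Order.TTheory GRing.Theory Num.Theory.
Local Open Scope ring_scope.

(* We work with linear functionals  phi : word -> rat  on the free algebra; such
   a functional acts on a formal sum F by  lin phi F.  Transposing Delta_ab gives
   an operator  dDelta a b  on functionals, computed by the twisted Leibniz
   rule, and transposing nabla_ab gives  dNabla a b.  The central object is the
   word pairing  pairing u w = Delta_u(w) in degree 0,  i.e. the counit
   composed with the transposed Delta_u. *)

Section Pairing.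
Variable n : nat.
Local Notation word := (word n).
Local Notation fa := (fa n).
Local Notation letter := (letter n).

Definition lin (phi : word -> rat) (F : fa) : rat := \sum_(x <- F) x.1 * phi x.2.

Lemma lin_ext phi psi F : phi =1 psi -> lin phi F = lin psi F.
Proof. by move=> e; apply: eq_bigr => x _; rewrite e. Qed.

Lemma lin_cat phi F G : lin phi (F ++ G) = lin phi F + lin phi G.
Proof. by rewrite /lin big_cat. Qed.

Lemma lin_scale phi c F : lin phi (fscale c F) = c * lin phi F.
Proof. by rewrite /lin big_map big_distrr; apply: eq_bigr => x _ /=; rewrite mulrA. Qed.

Lemma lin_flatten (T : Type) phi (P : seq (rat * T)) (G : T -> fa) :
  lin phi (flatten [seq fscale x.1 (G x.2) | x <- P]) =
  \sum_(x <- P) x.1 * lin phi (G x.2).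
Proof.
elim: P => [|x P IH]; first by rewrite /lin !big_nil.
by rewrite /= lin_cat lin_scale IH big_cons.
Qed.

Lemma lin_fmul phi P Q :
  lin phi (fmul P Q) = \sum_(x <- P) \sum_(y <- Q) x.1 * y.1 * phi (x.2 ++ y.2).
Proof. by rewrite /lin /fmul big_allpairs_dep. Qed.

Lemma lin_coef phi (F : fa) (S : seq word) :
  uniq S -> {subset [seq x.2 | x <- F] <= S} ->
  lin phi F = \sum_(w <- S) coef F w * phi w.
Proof.
move=> uniqS subS.
transitivity (\sum_(w <- S) \sum_(x <- F) (if x.2 == w then x.1 * phi x.2 else 0)).
  rewrite exchange_big; apply: eq_big_seq => x xF.
  have xS : x.2 \in S := subS _ (map_f (fun x => x.2) xF).
  rewrite -big_mkcond (eq_bigl (fun w => w == x.2)) => [|w]; last by rewrite eq_sym.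
  by rewrite big_const_seq count_uniq_mem // xS /= addr0.
apply: eq_bigr => w _; rewrite /coef big_distrl [RHS]big_mkcond.
by apply: eq_bigr => x _; case: eqP => [->|]; rewrite ?mul0r.
Qed.

Definition counit (w : word) : rat := (w == [::])%:R.

Lemma scal_lin F : scal F = lin counit F.
Proof.
rewrite /scal /coef /lin big_mkcond; apply: eq_bigr => x _ /=.
by rewrite /counit; case: eqP => _; rewrite ?mulr1 ?mulr0.
Qed.

(* The transpose of Delta_ab:  dDelta a b phi = phi o Delta_ab  on words. *)
Fixpoint dDelta (a b : 'I_n) (phi : word -> rat) (w : word) : rat :=
  match w with
  | [::] => 0
  | m :: t => ev a b m * phi t + dDelta a b (fun s => phi (sig a b m :: s)) t
  end.

Lemma lin_dlt_word a b phi w : lin phi (dlt_word a b w) = dDelta a b phi w.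
Proof.
elim: w phi => [|m t IH] phi; first by rewrite /lin big_nil.
by rewrite /= /lin big_cons big_map -/(lin (fun s => phi (_ :: s)) _) IH.
Qed.

Lemma lin_Delta_ab a b phi F : lin phi (Delta_ab a b F) = lin (dDelta a b phi) F.
Proof.
by rewrite /Delta_ab /flin lin_flatten; apply: eq_bigr => x _; rewrite lin_dlt_word.
Qed.

Lemma dDelta_ext a b phi psi w : phi =1 psi -> dDelta a b phi w = dDelta a b psi w.
Proof.
elim: w phi psi => [|m t IH] phi psi e //=.
by rewrite e (IH _ (fun s => psi (sig a b m :: s))).
Qed.

Lemma dDelta_ext_size a b phi psi w :
  (forall s, (size s).+1 = size w -> phi s = psi s) -> dDelta a b phi w = dDelta a b psi w.
Proof.
elim: w phi psi => [|m t IH] phi psi e //=.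
by rewrite e //; congr (_ + _); apply: IH => s /= es; apply: e; rewrite /= es.
Qed.

Lemma dDelta_lin a b c phi psi w :
  dDelta a b (fun s => c * phi s + psi s) w = c * dDelta a b phi w + dDelta a b psi w.
Proof.
elim: w phi psi => [|m t IH] phi psi /=; first by rewrite mulr0 addr0.
by rewrite IH; ring.
Qed.

Lemma dDelta0 a b w : dDelta a b (fun _ => 0) w = 0.
Proof. by elim: w => [|m t IH] //=; rewrite mulr0 add0r IH. Qed.

Lemma dDelta_sum (T : Type) a b (r : seq T) (c : T -> rat) (F : T -> word -> rat) w :
  dDelta a b (fun s => \sum_(x <- r) c x * F x s) w =
  \sum_(x <- r) c x * dDelta a b (F x) w.
Proof.
elim: r => [|x r IH]; first by rewrite big_nil -[RHS](dDelta0 a b w); apply: dDelta_ext => s; rewrite big_nil.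
rewrite big_cons -IH -dDelta_lin; apply: dDelta_ext => s; by rewrite big_cons.
Qed.

Lemma dDelta_rcons a b phi (w : word) (m : letter) :
  dDelta a b phi (rcons w m) =
  ev a b m * phi (map (sig a b) w) + dDelta a b (fun s => phi (rcons s m)) w.
Proof.
elim: w phi => [|x t IH] phi /=; first by rewrite !addr0.
by rewrite IH /=; ring.
Qed.

Lemma dDelta_swap a b c d (F : word -> word -> rat) (v w : word) :
  dDelta a b (fun s => dDelta c d (F s) v) w =
  dDelta c d (fun t => dDelta a b (fun s => F s t) w) v.
Proof.
elim: w F => [|x t IH] F /=; first by rewrite dDelta0.
by rewrite dDelta_lin; congr (_ + _); exact: (IH (fun s => F (sig a b x :: s))).
Qed.

Definition dDeltaW (u : word) (phi : word -> rat) := foldl (fun f l => dDelta l.1 l.2 f) phi u.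

Lemma dDeltaW_cat u v phi : dDeltaW (u ++ v) phi = dDeltaW v (dDeltaW u phi).
Proof. by rewrite /dDeltaW foldl_cat. Qed.

Lemma dDeltaW_ext u phi psi : phi =1 psi -> dDeltaW u phi =1 dDeltaW u psi.
Proof. by elim: u phi psi => [|l u IH] phi psi e //=; apply: IH => w; apply: dDelta_ext. Qed.

Lemma dDeltaW_sum (T : Type) u (r : seq T) (c : T -> rat) (F : T -> word -> rat) w :
  dDeltaW u (fun s => \sum_(x <- r) c x * F x s) w = \sum_(x <- r) c x * dDeltaW u (F x) w.
Proof.
elim: u F => [|l u IH] F //=.
rewrite (dDeltaW_ext u (fun w => dDelta_sum l.1 l.2 r c F w)).
exact: (IH (fun x => dDelta l.1 l.2 (F x))).
Qed.

Lemma dDeltaW0 u w : dDeltaW u (fun _ => 0) w = 0.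
Proof. by elim: u => [|l u IH] //=; rewrite (dDeltaW_ext u (dDelta0 l.1 l.2)). Qed.

Lemma lin_DeltaW u phi F : lin phi (DeltaW u F) = lin (dDeltaW u phi) F.
Proof. by elim: u phi => [|l u IH] phi //=; rewrite lin_Delta_ab IH. Qed.

Definition dNabla (a b : 'I_n) (phi : word -> rat) (w : word) : rat :=
  lin phi (nab_rword a b (rev w)).

Definition dNablaW (u : word) (phi : word -> rat) := foldr (fun l f => dNabla l.1 l.2 f) phi u.

Lemma dNablaW_cat u v phi : dNablaW (u ++ v) phi = dNablaW u (dNablaW v phi).
Proof. by rewrite /dNablaW foldr_cat. Qed.

Lemma dNablaW_ext u phi psi : phi =1 psi -> dNablaW u phi =1 dNablaW u psi.
Proof. by elim: u => [|l u IH] e //= w; apply: lin_ext; exact: IH. Qed.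

Lemma lin_NablaW u phi F : lin phi (NablaW u F) = lin (dNablaW u phi) F.
Proof.
elim: u F => [|l u IH] F //=.
by rewrite IH /Nabla_ab /flin (lin_flatten _ _ (fun w => nab_rword l.1 l.2 (rev w))).
Qed.

Local Ltac eqcase := repeat (match goal with |- context [?x == ?y] =>
  let H := fresh "H" in case: (@eqP _ x y) => H; try subst end);
  try done; try (exfalso; by auto).

Lemma ev_sym (a b : 'I_n) (m : letter) : ev a b m = ev m.1 m.2 (a, b).
Proof. by case: m => c d /=; rewrite /ev !xpair_eqE /=; eqcase. Qed.

Lemma ev_anti (a b : 'I_n) (m : letter) : ev b a m = - ev a b m.
Proof. by case: m => c d; rewrite /ev !xpair_eqE /=; eqcase; rewrite ?opprK ?oppr0. Qed.

Definition permL (s : {perm 'I_n}) (m : letter) : letter := (s m.1, s m.2).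

Lemma sig_permL (a b : 'I_n) : sig a b =1 permL (tperm a b).
Proof. by []. Qed.

Lemma ev_perm (s : {perm 'I_n}) (a b : 'I_n) (m : letter) :
  ev (s a) (s b) (permL s m) = ev a b m.
Proof. by case: m => c d; rewrite /ev /permL /= !xpair_eqE !(inj_eq perm_inj). Qed.

Lemma sig_perm (s : {perm 'I_n}) (a b : 'I_n) (m : letter) :
  sig (s a) (s b) (permL s m) = permL s (sig a b m).
Proof.
by rewrite /sig /permL /= !(inj_tperm _ _ _ (@perm_inj _ s)).
Qed.

Lemma ev_sig (a b c d : 'I_n) (m : letter) :
  ev a b (sig c d m) = ev (tperm c d a) (tperm c d b) m.
Proof.
by rewrite sig_permL -{1}(tpermK c d a) -{1}(tpermK c d b) ev_perm.
Qed.

Lemma sigK (a b : 'I_n) : involutive (sig a b).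
Proof. by case=> c d; rewrite /sig /= !tpermK. Qed.

Lemma sig_ev_neq0 (l m : letter) : ev l.1 l.2 m != 0 -> sig l.1 l.2 =1 sig m.1 m.2.
Proof.
case: l => a b; case: m => c d /= + x; rewrite /ev /sig /= ?xpair_eqE.
have [->|hab] := eqVneq a b; first by rewrite eqxx.
have [e1|h1] := eqVneq c a; have [e2|h2] := eqVneq d b;
have [e3|h3] := eqVneq c b; have [e4|h4] := eqVneq d a; rewrite /= ?eqxx //;
  try (by rewrite e1 e2); try (by rewrite e3 e4 tpermC).
Qed.

Definition pairing (u : word) : word -> rat := dDeltaW u counit.

Lemma pairing_rcons u l : pairing (rcons u l) = dDelta l.1 l.2 (pairing u).
Proof. by rewrite /pairing /dDeltaW foldl_rcons. Qed.

Lemma pairing_cat u v : pairing (u ++ v) = dDeltaW v (pairing u).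
Proof. exact: dDeltaW_cat. Qed.

Lemma pairing_nil_r v : pairing v [::] = counit v.
Proof. by case/lastP: v => [|v l] //; rewrite pairing_rcons; case: v. Qed.

Lemma pairing_size u w : size u != size w -> pairing u w = 0.
Proof.
elim/last_ind: u w => [|u l IH] w; first by rewrite /pairing /= /counit; case: w.
rewrite pairing_rcons size_rcons => hs; rewrite -(dDelta0 l.1 l.2 w).
apply: dDelta_ext_size => s es; apply: IH.
by apply: contra hs => /eqP ->; rewrite es.
Qed.

Lemma dDelta_perm (s : {perm 'I_n}) a b phi (w : word) :
  dDelta (s a) (s b) phi (map (permL s) w) = dDelta a b (fun t => phi (map (permL s) t)) w.
Proof. by elim: w phi => [|x t IH] phi //=; rewrite ev_perm sig_perm IH. Qed.

Lemma pairing_perm (s : {perm 'I_n}) (x y : word) :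
  pairing (map (permL s) x) (map (permL s) y) = pairing x y.
Proof.
elim/last_ind: x y => [|x l IH] y; first by rewrite /pairing /= /counit; case: y.
rewrite map_rcons !pairing_rcons dDelta_perm.
by apply: dDelta_ext => t; rewrite IH.
Qed.

Lemma pairing_sig a b (x y : word) :
  pairing (map (sig a b) x) y = pairing x (map (sig a b) y).
Proof.
rewrite -[in RHS](pairing_perm (tperm a b)) -!map_comp.
have -> : [seq (permL (tperm a b) \o sig a b) z | z <- y] = y.
  by rewrite -[RHS]map_id; apply: eq_map => z /=; rewrite -sig_permL sigK.
by congr pairing; apply: eq_map.
Qed.

(* The induction step for symmetry: expanding the last letter of both words,
   the two cross terms agree by the induction hypothesis (used twice) and the
   two leading terms agree because x_l pairs with x_m only when l, m name the
   same transposition. *)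
Lemma pairing_sym_step k :
  (forall u v : word, (size u <= k)%N -> pairing u v = pairing v u) ->
  forall u v : word, (size u <= k.+1)%N -> pairing u v = pairing v u.
Proof.
move=> IH u v hu.
have [e|ne] := eqVneq (size u) (size v); last by rewrite !pairing_size // eq_sym.
case/lastP: u hu e => [|u l] hu e; first by rewrite pairing_nil_r.
case/lastP: v e => [|v m] e; first by rewrite pairing_nil_r.
have hu' : (size u <= k)%N by rewrite size_rcons in hu.
have hv' : (size v <= k)%N by move: e hu; rewrite !size_rcons => -[<-].
rewrite !pairing_rcons !dDelta_rcons.
rewrite (dDelta_ext _ _ _ (fun s => IH _ _ hu')).
rewrite [in RHS](dDelta_ext _ _ _ (fun s => IH _ _ hv')).
under dDelta_ext => s do rewrite pairing_rcons.
under [in RHS]dDelta_ext => s do rewrite pairing_rcons.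
rewrite dDelta_swap ev_sym -surjective_pairing; congr (_ + _); last first.
  apply: dDelta_ext => t; apply: dDelta_ext_size => s es.
  by apply: IH; move: hv'; rewrite -es; exact: ltnW.
have [z|nz] := eqVneq (ev m.1 m.2 l) 0; first by rewrite z !mul0r.
by rewrite IH // pairing_sig (eq_map (sig_ev_neq0 nz)).
Qed.

Lemma pairing_sym (u v : word) : pairing u v = pairing v u.
Proof.
have: forall k u v, (size u <= k)%N -> pairing u v = pairing v u.
  elim=> [|k IH] {}u {}v; last exact: pairing_sym_step.
  by rewrite leqn0 => /nilP ->; rewrite pairing_nil_r.
by apply; exact: leqnn.
Qed.

(* Expanding the first letter of the second argument produces nabla. *)
Lemma pairing_cons_r (v : word) (l : letter) (X : word) :
  pairing v (l :: X) = lin (fun w => pairing w X) (nab_rword l.1 l.2 (rev v)).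
Proof.
elim/last_ind: v l X => [|v m IH] l X; first by rewrite /lin big_nil.
rewrite pairing_rcons /= rev_rcons /= /lin big_cons big_map revK /=.
rewrite (ev_sym m.1) -surjective_pairing; congr (_ + _).
rewrite (dDelta_ext _ _ _ (fun s => IH (sig m.1 m.2 l) s)).
rewrite /lin (dDelta_sum _ _ _ (fun x => x.1) (fun x s => pairing x.2 s)).
by apply: eq_bigr => x _; rewrite pairing_rcons.
Qed.

Lemma dNablaW_counit u v : dNablaW u counit v = pairing u v.
Proof.
rewrite pairing_sym; elim: u v => [|l u IH] v; first by rewrite pairing_nil_r.
by rewrite /= /dNabla (lin_ext _ IH) pairing_cons_r.
Qed.

Lemma dDelta_diag (a : 'I_n) phi (w : word) : dDelta a a phi w = 0.
Proof. by elim: w phi => [|m t IH] phi //=; rewrite /ev eqxx mul0r add0r IH. Qed.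

Lemma dDelta_anti (a b : 'I_n) phi (w : word) : dDelta b a phi w = - dDelta a b phi w.
Proof.
elim: w phi => [|m t IH] phi /=; first by rewrite oppr0.
by rewrite ev_anti /sig tpermC IH opprD mulNr.
Qed.

Lemma dDelta2 (a b c d : 'I_n) phi (m : letter) (t : word) :
  dDelta a b (dDelta c d phi) (m :: t) =
  ev a b m * dDelta c d phi t + ev c d (sig a b m) * dDelta a b phi t +
  dDelta a b (dDelta c d (fun s => phi (sig c d (sig a b m) :: s))) t.
Proof. by rewrite /= dDelta_lin addrA. Qed.

Lemma dDelta_sq (a b : 'I_n) phi (w : word) : dDelta a b (dDelta a b phi) w = 0.
Proof.
elim: w phi => [|m t IH] phi //.
by rewrite dDelta2 sigK ev_sig tpermL tpermR ev_anti IH; ring.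
Qed.

Lemma tperm_comm (i j k l x : 'I_n) : uniq [:: i; j; k; l] ->
  tperm i j (tperm k l x) = tperm k l (tperm i j x).
Proof.
rewrite /= !inE !negb_or => /and4P[/and3P[ij ik il] /andP[jk jl] kl _].
by rewrite (inj_tperm _ _ _ (@perm_inj _ (tperm i j))) (tpermD ik) ?(tpermD il).
Qed.

Lemma dDelta_comm (i j k l : 'I_n) phi (w : word) : uniq [:: i; j; k; l] ->
  dDelta k l (dDelta i j phi) w = dDelta i j (dDelta k l phi) w.
Proof.
move=> U; have U' : uniq ([:: k; l] ++ [:: i; j]) by rewrite uniq_catC.
move: (U); rewrite /= !inE !negb_or => /and4P[/and3P[ij ik il] /andP[jk jl] kl _].
have ki : k != i by rewrite eq_sym. have li : l != i by rewrite eq_sym.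
have kj : k != j by rewrite eq_sym. have lj : l != j by rewrite eq_sym.
elim: w phi => [|m t IH] phi //.
rewrite !dDelta2 !ev_sig (tpermD ki li) (tpermD kj lj) (tpermD ik jk) (tpermD il jl).
have -> : sig i j (sig k l m) = sig k l (sig i j m).
  by case: m => p q; rewrite /sig /= (tperm_comm _ U') (tperm_comm _ U').
by rewrite IH; ring.
Qed.

Lemma tperm3 (i j k x : 'I_n) : uniq [:: i; j; k] ->
  tperm j k (tperm k i x) = tperm i j (tperm j k x) /\
  tperm k i (tperm i j x) = tperm i j (tperm j k x).
Proof.
rewrite /= !inE !negb_or => /and3P[/andP[ij ik] jk _].
have ji : j != i by rewrite eq_sym. have ki : k != i by rewrite eq_sym.
split.
  rewrite [LHS](inj_tperm _ _ _ (@perm_inj _ (tperm j k))) tpermR (tpermD ji ki).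
  by rewrite tpermC.
rewrite [RHS](inj_tperm _ _ _ (@perm_inj _ (tperm i j))) tpermR (tpermD ik jk).
by rewrite tpermC.
Qed.

Lemma dDelta_three (i j k : 'I_n) phi (w : word) : uniq [:: i; j; k] ->
  dDelta j k (dDelta i j phi) w + (dDelta k i (dDelta j k phi) w +
    dDelta i j (dDelta k i phi) w) = 0.
Proof.
move=> U; move: (U); rewrite /= !inE !negb_or => /and3P[/andP[ij ik] jk _].
have ji : j != i by rewrite eq_sym. have ki : k != i by rewrite eq_sym.
have kj : k != j by rewrite eq_sym.
elim: w phi => [|m t IH] phi; first by rewrite /= !addr0.
rewrite !dDelta2 !ev_sig (tpermD ji ki) (tpermD kj ij) (tpermD ik jk) ?tpermL ?tpermR.
have -> : sig j k (sig k i m) = sig i j (sig j k m).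
  by case: m => p q; rewrite /sig /= !(proj1 (tperm3 _ U)).
have -> : sig k i (sig i j m) = sig i j (sig j k m).
  by case: m => p q; rewrite /sig /= !(proj2 (tperm3 _ U)).
have := IH (fun s => phi (sig i j (sig j k m) :: s)).
by rewrite (ev_anti k i) (ev_anti i j) (ev_anti j k) => H; lra.
Qed.

Lemma dDeltaW_rel (r : fa) : fk_rel r -> forall psi s,
  \sum_(x <- r) x.1 * dDeltaW x.2 psi s = 0.
Proof.
case=> [i|i j ij|i j ij|i j k l U|i j k U] psi s;
  rewrite /= !big_cons big_nil /= ?mul1r ?addr0.
- exact: dDelta_diag.
- by rewrite dDelta_anti; ring.
- exact: dDelta_sq.
- by rewrite (dDelta_comm _ _ U); ring.
- exact: dDelta_three.
Qed.

Lemma pairing_ideal (R : fa) : fk_ideal R -> forall t, lin (pairing^~ t) R = 0.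
Proof.
elim=> [|P r c u v _ IH rr] t; first by rewrite /lin big_nil.
rewrite /fadd lin_cat lin_scale IH add0r lin_fmul big_cons big_nil addr0 /=.
under eq_bigr => y _ do rewrite mul1r.
rewrite -/(lin (fun w => pairing (u ++ w) t) _) lin_fmul.
under eq_bigr => x _ do rewrite big_cons big_nil addr0 /= mulr1 pairing_cat dDeltaW_cat.
rewrite -(dDeltaW_sum v r (fun x => x.1) (fun x => dDeltaW x.2 (pairing u))).
by rewrite (dDeltaW_ext v (fun s => dDeltaW_rel rr (pairing u) s)) dDeltaW0 mulr0.
Qed.

Definition form (P Q : fa) : rat := \sum_(x <- P) x.1 * lin (pairing x.2) Q.

(* The form of the statement: only the degree-matching terms contribute,
   and those are exactly the pairings. *)
Lemma fk_form_form P Q : fk_form P Q = form P Q.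
Proof.
apply: eq_bigr => x _; congr (_ * _).
rewrite scal_lin lin_DeltaW /lin /hpart big_filter [LHS]big_mkcond.
apply: eq_bigr => y _; case: eqP => // /eqP h.
by rewrite -/(pairing _) pairing_size ?mulr0 // eq_sym.
Qed.

Lemma scal_Delta P Q : scal (Delta P Q) = form P Q.
Proof.
rewrite scal_lin /Delta (lin_flatten _ _ (fun w => DeltaW w Q)).
by apply: eq_bigr => x _; rewrite lin_DeltaW.
Qed.

Lemma scal_Nabla P Q : scal (Nabla Q P) = form P Q.
Proof.
rewrite scal_lin /Nabla (lin_flatten _ _ (fun w => NablaW w Q)).
apply: eq_bigr => x _; rewrite lin_NablaW; congr (_ * _).
by apply: lin_ext; exact: dNablaW_counit.
Qed.

Lemma form_sym P Q : form P Q = form Q P.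
Proof.
rewrite /form /lin; under eq_bigr => x _ do rewrite big_distrr.
under [RHS]eq_bigr => y _ do rewrite big_distrr.
rewrite exchange_big; apply: eq_bigr => y _; apply: eq_bigr => x _ /=.
by rewrite pairing_sym; ring.
Qed.

Lemma form_linear c P P' Q : form (fadd (fscale c P) P') Q = c * form P Q + form P' Q.
Proof.
rewrite /form /fadd big_cat big_map big_distrr; congr (_ + _).
by apply: eq_bigr => x _; rewrite /= mulrA.
Qed.

(* The three expressions of the adjointness statement all expand to the
   same double sum over the words of P1 and P2. *)
Definition form_prod (P1 P2 Q : fa) : rat :=
  \sum_(x <- P1) \sum_(z <- P2) x.1 * z.1 * lin (pairing (x.2 ++ z.2)) Q.

Lemma form_fmul P1 P2 Q : form (fmul P1 P2) Q = form_prod P1 P2 Q.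
Proof. by rewrite /form /fmul big_allpairs_dep. Qed.

Lemma form_Delta P1 P2 Q : form P1 (Delta P2 Q) = form_prod P1 P2 Q.
Proof.
apply: eq_bigr => x _.
rewrite /Delta (lin_flatten _ _ (fun w => DeltaW w Q)) big_distrr.
by apply: eq_bigr => z _ /=; rewrite lin_DeltaW pairing_cat; ring.
Qed.

Lemma form_Nabla P1 P2 Q : form P2 (Nabla Q P1) = form_prod P1 P2 Q.
Proof.
rewrite /form.
under eq_bigr => z _ do rewrite /Nabla (lin_flatten _ _ (fun w => NablaW w Q)) big_distrr.
rewrite exchange_big; apply: eq_bigr => x _; apply: eq_bigr => z _ /=.
rewrite lin_NablaW mulrCA mulrA; congr (_ * _); apply: lin_ext => w.
rewrite -dNablaW_counit dNablaW_cat; apply: dNablaW_ext => y.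
by rewrite dNablaW_counit pairing_sym.
Qed.

Lemma form_wd P P' Q : fk_eq P P' -> form P Q = form P' Q.
Proof.
case=> R [IR eR]; pose G w := lin (pairing w) Q.
rewrite -[form P Q]/(lin G P) -[form P' Q]/(lin G P').
pose S := undup [seq x.2 | x <- P ++ P' ++ R].
have supp (F : fa) : {subset [seq x.2 | x <- F] <= [seq x.2 | x <- P ++ P' ++ R]} ->
   {subset [seq x.2 | x <- F] <= S}.
  by move=> h w /h; rewrite mem_undup.
have uS : uniq S := undup_uniq _.
have GR : lin G R = 0.
  rewrite /lin /G; under eq_bigr => x _ do rewrite /lin big_distrr.
  rewrite exchange_big big1 // => y _.
  transitivity (y.1 * lin (pairing^~ y.2) R); last by rewrite pairing_ideal // mulr0.
  by rewrite /lin big_distrr; apply: eq_bigr => x _ /=; ring.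
apply/eqP; rewrite -subr_eq0 -GR.
rewrite (lin_coef G uS (supp P _)); last by move=> w; rewrite map_cat mem_cat => ->.
rewrite (lin_coef G uS (supp P' _)); last first.
  by move=> w; rewrite !map_cat !mem_cat => ->; rewrite orbT.
rewrite (lin_coef G uS (supp R _)); last first.
  by move=> w; rewrite !map_cat !mem_cat => ->; rewrite !orbT.
by rewrite -sumrB; apply/eqP/eq_bigr => w _; rewrite -mulrBl eR.
Qed.

End Pairing.

Theorem mainTheorem14 (n : nat) :
  (* the four scalars agree for homogeneous P, Q of the same degree *)
  (forall (d : nat) (P Q : fa n), homogeneous d P -> homogeneous d Q ->
     [/\ scal (Delta P Q) = scal (Delta Q P),
         scal (Delta Q P) = scal (Nabla P Q) &
         scal (Nabla P Q) = scal (Nabla Q P)]) /\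
  (* <,> is a well-defined form on E_n ... *)
  (forall P P' Q Q' : fa n, fk_eq P P' -> fk_eq Q Q' ->
     fk_form P Q = fk_form P' Q') /\
  (* ... which is bilinear ... *)
  (forall (c : rat) (P P' Q : fa n),
     fk_form (fadd (fscale c P) P') Q = c * fk_form P Q + fk_form P' Q /\
     fk_form Q (fadd (fscale c P) P') = c * fk_form Q P + fk_form Q P') /\
  (* ... and symmetric *)
  (forall P Q : fa n, fk_form P Q = fk_form Q P) /\
  (* adjointness *)
  (forall P1 P2 Q : fa n,
     fk_form (fmul P1 P2) Q = fk_form P1 (Delta P2 Q) /\
     fk_form P1 (Delta P2 Q) = fk_form P2 (Nabla Q P1)).
Proof.
split.
  move=> d P Q _ _; rewrite !scal_Delta !scal_Nabla.
  by split; rewrite form_sym.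
split.
  move=> P P' Q Q' hP hQ; rewrite !fk_form_form (form_wd _ hP).
  by rewrite form_sym (form_wd _ hQ) form_sym.
split.
  move=> c P P' Q; rewrite !fk_form_form form_linear; split => //.
  by rewrite form_sym form_linear !(form_sym Q).
split; first by move=> P Q; rewrite !fk_form_form form_sym.
by move=> P1 P2 Q; rewrite !fk_form_form form_fmul form_Delta form_Nabla.
Qed.
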